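(* Let $X$ be a Banach space with a normalized 1-unconditional basis $(x_i)_i$. Then the sequence $(v_i)_i$ in $\mathcal{J}_*(X)$ satisfies: (i) $(v_i)_i$ is a normalized monotone Schauder basis of $\mathcal{J}_*(X)$; (ii) for all scalars $(a_i)_{i=1}^n$, $|\sum_{i=1}^na_i|\le\|\sum_{i=1}^na_iv_i\|$; (iii) the unit ball of $\mathcal{J}_*(X)$ is a 1-norming set for $J(X)$, hence $J(X)$ is naturally isometric to a subspace of $\mathcal{J}_*(X)^*$ under the identification $v_1^*=e_1$, $v_{i+1}^*=e_{i+1}-e_i$ ($i\in\mathbb{N}$), where $(v_i^* )$ are the biorthogonal functionals of $(v_i)$; in particular the closed linear span of $(v_i^* )_i$ is isometrically isomorphic to $J(X)$; (iv) for every eventually zero scalar sequence $(a_i)_i$, $\|\sum_ia_iv_i^*\|=\sup\{\|\sum_n(a_{k_n}-a_{m_n})x_{k_n}\|:1\le k_1<m_1\le k_2<m_2\le\cdots\}$; (v) for all scalars $(a_i)_{i=1}^n$, $(b_i)_{i=1}^n$, $\|\sum_{i=1}^na_ib_iv_i^*\|\le 2\|\sum_{i=1}^na_iv_i^*\|\,\|\sum_{i=1}^nb_iv_i^*\|$.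
   Context: The jamesification $J(X)$ of $(x_i)_i$ is the completion of $c_{00}(\mathbb{N})$ under $\|\sum_ia_ie_i\|=\sup\{\|\sum_n(\sum_{i=k_n}^{m_n}a_i)x_{k_n}\|:1\le k_1\le m_1<k_2\le m_2<\cdots\}$, with unit vector basis $(e_i)$ and biorthogonals $(e_i^* )\subset J(X)^*$. Let $s\in J(X)^*$ be given by $s(\sum_ia_ie_i)=\sum_ia_i$ and $\mathcal{J}_*(X)=\mathbb{R}s\oplus\overline{\mathrm{span}}\{e_i^*:i\in\mathbb{N}\}\subset J(X)^*$. Define $v_1=s=w^*\text{-}\sum_{j\ge1}e_j^*$ and $v_{i+1}=s-\sum_{j=1}^ie_j^*=w^*\text{-}\sum_{j\ge i+1}e_j^*$. *)

From HB Require Import structures.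
From mathcomp Require Import all_boot all_order all_algebra.
From mathcomp Require Import all_classical all_reals all_analysis.
From Stdlib Require Import ClassicalEpsilon.
Set Implicit Arguments. Unset Strict Implicit. Unset Printing Implicit Defensive.
Import Order.TTheory GRing.Theory Num.Theory.
Import numFieldNormedType.Exports.
Local Open Scope classical_set_scope.
Local Open Scope ring_scope.

(* Indices are 0-based throughout: paper index i corresponds to i-1 here. *)

Section Defs.
Variable R : realType.

Section BasisX.
Variable X : normedModType R.
Variable x : nat -> X.

Definition schauder_basis : Prop :=
  forall y : X, exists! a : nat -> R,
    (fun n : nat => \sum_(i < n) a i *: x i) @ \oo --> y.

Definition normalized : Prop := forall i, `|x i| = 1.

Definition one_unconditional : Prop :=
  forall (n : nat) (a : nat -> R) (eps : nat -> bool),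
    `|\sum_(i < n) ((-1) ^+ eps i * a i) *: x i| <= `|\sum_(i < n) a i *: x i|.

(* admissible families of intervals [k_1,m_1],[k_2,m_2],... with
   k_1 <= m_1 < k_2 <= m_2 < ... ; pair (k,m) = interval [k,m] *)
Definition J_admissible (s : seq (nat * nat)) : bool :=
  all (fun p => (p.1 <= p.2)%N) s && sorted (fun p q => (p.2 < q.1)%N) s.

Definition J_term (a : nat -> R) (s : seq (nat * nat)) : X :=
  \sum_(p <- s) (\sum_(p.1 <= i < p.2.+1) a i) *: x p.1.

Definition J_norm (a : nat -> R) : R :=
  sup [set `|J_term a s| | s in [set s | J_admissible s]].

Definition Jd_admissible (s : seq (nat * nat)) : bool :=
  all (fun p => (p.1 < p.2)%N) s && sorted (fun p q => (p.2 <= q.1)%N) s.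

Definition Jd_term (a : nat -> R) (s : seq (nat * nat)) : X :=
  \sum_(p <- s) (a p.1 - a p.2) *: x p.1.

Definition Jd_norm (a : nat -> R) : R :=
  sup [set `|Jd_term a s| | s in [set s | Jd_admissible s]].
End BasisX.

Definition trunc (n : nat) (a : nat -> R) : nat -> R :=
  fun i => if (i < n)%N then a i else 0.

Section Functionals.
Variable V : normedModType R.

Definition bdd_linear (f : V -> R) : Prop :=
  (forall (c : R) (y z : V), f (c *: y + z) = c * f y + f z) /\
  exists C : R, forall y : V, `|f y| <= C * `|y|.

Definition dnorm (f : V -> R) : R :=
  sup [set `|f y| | y in [set y : V | `|y| <= 1]].

(* J_*(X) = R s (+) closed span {e_i^*}, as a set of functionals *)
Definition Jstar (s : V -> R) (estar : nat -> V -> R) (f : V -> R) : Prop :=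
  bdd_linear f /\
  exists c : R, forall eps : R, 0 < eps -> exists (n : nat) (b : nat -> R),
    dnorm (fun y => f y - c * s y - \sum_(i < n) b i * estar i y) < eps.

(* v_1 = s, v_{i+1} = s - sum_{j<=i} e_j^*  (0-based: v 0 = s) *)
Definition vseq (s : V -> R) (estar : nat -> V -> R) (i : nat) : V -> R :=
  fun y => s y - \sum_(j < i) estar j y.

Definition fcomb (n : nat) (a : nat -> R) (g : nat -> V -> R) : V -> R :=
  fun y => \sum_(i < n) a i * g i y.

Definition expansion (g : nat -> V -> R) (f : V -> R) (a : nat -> R) : Prop :=
  (fun N : nat => dnorm (fun y => f y - fcomb N a g y)) @ \oo --> (0 : R).

(* the coordinates of f in the basis (g_i): v_i^*(f) = coef g f i *)
Definition coef (g : nat -> V -> R) (f : V -> R) : nat -> R :=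
  epsilon (inhabits (fun _ : nat => (0 : R))) (expansion g f).

(* norm of sum_{i<n} a_i v_i^* in J_*(X)^* *)
Definition vstar_norm (s : V -> R) (estar : nat -> V -> R)
    (n : nat) (a : nat -> R) : R :=
  sup [set `|\sum_(i < n) a i * coef (vseq s estar) f i|
        | f in [set f | Jstar s estar f /\ dnorm f <= 1]].
(* the vectors of J(X) identified with v_i^*: e_1 and e_{i+1} - e_i *)
Definition jdiff (e : nat -> V) (i : nat) : V :=
  if i is j.+1 then e j.+1 - e j else e 0%N.
End Functionals.
End Defs.

(* On a finite sum y = \sum_i a_i e_i the functional v_k is the tail sum
   \sum_(i >= k) a_i, so \sum_i a_i v_i^* acts as \sum_i a_i (e_i - e_(i-1)) and the
   norms in (iii) and (iv) are J-norms of difference sequences.  Two contractions of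
   J(X) carry the argument.  Collapsing all coordinates from N on into coordinate N
   only merges intervals of admissible families; this gives the monotonicity of (v_i)
   and the expansion f = \sum_i f(e_i - e_(i-1)) v_i of every f in J_*(X).  The map
   y |-> \sum_n (v_(k_n) - v_(m_n + 1))(y) x_(k_n), composed with a functional obtained
   from finite-dimensional Hahn-Banach on span{x_(k_n)}, is a functional of
   span{s, e_i^*} norming a given finite sum, whence (iii).  Finally (v) is the Leibniz
   rule a_k b_k - a_m b_m = a_k (b_k - b_m) + b_m (a_k - a_m), estimated with
   1-unconditionality and |a_k| <= |\sum_i a_i v_i^*|. *)

From HB Require Import structures.
From mathcomp Require Import all_boot all_order all_algebra.
From mathcomp Require Import all_classical all_reals all_analysis.
From mathcomp Require Import ring lra.
From Stdlib Require Import ClassicalEpsilon.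
Set Implicit Arguments. Unset Strict Implicit. Unset Printing Implicit Defensive.
Import Order.TTheory GRing.Theory Num.Theory.
Import numFieldNormedType.Exports.
Local Open Scope classical_set_scope.
Local Open Scope ring_scope.

(** * Finite-dimensional Hahn-Banach *)

Section Dominated.
Variables (R : realType) (X : normedModType R) (u : nat -> X).

Definition dominated (n : nat) (lam : nat -> R) : Prop :=
  forall d : nat -> R, \sum_(i < n) lam i * d i <= `|\sum_(i < n) d i *: u i|.

Lemma dominated_extend n lam : dominated n lam ->
  exists t, dominated n.+1 (fun i => if i == n then t else lam i).
Proof.
move=> dom.
pose V (d : nat -> R) := \sum_(i < n) d i *: u i.
pose L (d : nat -> R) := \sum_(i < n) lam i * d i.
have VZ c d : V (fun i => c * d i) = c *: V d.
  by rewrite /V scaler_sumr; apply: eq_bigr => i _; rewrite scalerA.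
have LZ c d : L (fun i => c * d i) = c * L d.
  by rewrite /L mulr_sumr; apply: eq_bigr => i _; rewrite mulrCA.
have sep d d' : L d - `|V d - u n| <= `|V d' + u n| - L d'.
  have : L (fun i => d i + d' i) <= `|V (fun i => d i + d' i)| := dom _.
  have -> : L (fun i => d i + d' i) = L d + L d'.
    by rewrite /L -big_split; apply: eq_bigr => i _; rewrite mulrDr.
  have -> : V (fun i => d i + d' i) = (V d - u n) + (V d' + u n).
    by rewrite addrACA addNr addr0 /V -big_split; apply: eq_bigr => i _; rewrite scalerDl.
  by move: (ler_normD (V d - u n) (V d' + u n)); lra.
(* The new coefficient is squeezed between the lower bounds [L d - |V d - u n|] and
   the upper bounds [|V d' + u n| - L d'], separated by [sep]. *)
pose A := [set L d - `|V d - u n| | d in [set: nat -> R]].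
have A_sup : has_sup A.
  split; first by exists (L 0 - `|V 0 - u n|), 0.
  by exists (`|V 0 + u n| - L 0) => _ [d _ <-]; apply: sep.
exists (sup A) => d.
rewrite big_ord_recr [in X in _ <= X]big_ord_recr /= eqxx.
under eq_bigr do rewrite (ltn_eqF (ltn_ord _)).
rewrite -/(L d) -/(V d).
have t_lb d' : sup A <= `|V d' + u n| - L d'.
  by apply: ge_sup; [case: A_sup | move=> _ [d'' _ <-]; apply: sep].
have t_ub d' : L d' - `|V d' - u n| <= sup A by apply: sup_upper_bound => //; exists d'.
case: (ltrgt0P (d n)) => [dn_gt0|dn_lt0|->]; last first.
- by rewrite mulr0 addr0 scale0r addr0; apply: dom.
- have := t_ub (fun i => (- d n)^-1 * d i); rewrite VZ LZ.
  have -> : (- d n)^-1 *: V d - u n = (- d n)^-1 *: (V d + d n *: u n).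
    by rewrite scalerDr scalerA invrN mulNr mulVf ?lt_eqF // scaleN1r.
  rewrite normrZ gtr0_norm ?invr_gt0 ?oppr_gt0 // -mulrBr => h.
  have dn_opp : 0 < - d n by rewrite oppr_gt0.
  have := ler_wpM2l (ltW dn_opp) h.
  by rewrite mulrA divff ?oppr_eq0 ?lt_eqF // mul1r; lra.
- have := t_lb (fun i => (d n)^-1 * d i); rewrite VZ LZ.
  have -> : (d n)^-1 *: V d + u n = (d n)^-1 *: (V d + d n *: u n).
    by rewrite scalerDr scalerA mulVf ?gt_eqF // scale1r.
  rewrite normrZ gtr0_norm ?invr_gt0 // -mulrBr => h.
  have := ler_wpM2l (ltW dn_gt0) h.
  by rewrite mulrA divff ?gt_eqF // mul1r; lra.
Qed.

Lemma exists_dominated n : exists lam, lam 0%N = `|u 0%N| /\ dominated n.+1 lam.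
Proof.
elim: n => [|n [lam [lam0 dom]]].
  exists (fun _ => `|u 0%N|); split => // d.
  by rewrite !big_ord1 normrZ mulrC ler_wpM2r // ler_norm.
have [t dom'] := dominated_extend dom.
by exists (fun i => if i == n.+1 then t else lam i).
Qed.

End Dominated.

Lemma exists_norming_coefs (R : realType) (X : normedModType R)
    (u : nat -> X) (r : nat) (c : nat -> R) :
  exists mu : nat -> R,
    (forall d : nat -> R, `|\sum_(i < r) mu i * d i| <= `|\sum_(i < r) d i *: u i|) /\
    \sum_(i < r) mu i * c i = `|\sum_(i < r) c i *: u i|.
Proof.
(* Dominate on the family [w, u_0, ..., u_(r-1)] with [w = \sum_i c_i u_i]. *)
set w := \sum_(i < r) c i *: u i.
have [lam [lam0 dom]] := exists_dominated (fun i => if i is j.+1 then u j else w) r.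
have dom' (d0 : R) (d : nat -> R) : lam 0%N * d0 + \sum_(i < r) lam i.+1 * d i <=
                 `|d0 *: w + \sum_(i < r) d i *: u i|.
  by have := dom (fun i => if i is j.+1 then d j else d0); rewrite !big_ord_recl.
have ub (d : nat -> R) : \sum_(i < r) lam i.+1 * d i <= `|\sum_(i < r) d i *: u i|.
  by have := dom' 0 d; rewrite mulr0 scale0r !add0r.
have sumN (F : nat -> R) (G : nat -> X) : 
    \sum_(i < r) (- F i) *: G i = - \sum_(i < r) F i *: G i.
  by rewrite -sumrN; apply: eq_bigr => i _; rewrite scaleNr.
have sumMN (F G : nat -> R) : \sum_(i < r) F i * - G i = - \sum_(i < r) F i * G i.
  by rewrite -sumrN; apply: eq_bigr => i _; rewrite mulrN.
exists (fun i => lam i.+1); split.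
  move=> d; rewrite ler_norml (ub d) andbT lerNl.
  by have := ub (fun i => - d i); rewrite sumN normrN (sumMN (fun i => lam i.+1)).
apply/eqP; rewrite eq_le (ub c) /=.
have := dom' 1 (fun i => - c i).
by rewrite sumN (sumMN (fun i => lam i.+1)) -/w scale1r subrr normr0 lam0 mulr1 subr_le0.
Qed.

(** * Multipliers of a 1-unconditional basis *)

Section Unconditional.
Variables (R : realType) (X : normedModType R) (x : nat -> X).
Hypothesis x_unc : one_unconditional x.

Lemma unconditional_mul_le1 (j N : nat) (g b : nat -> R) :
  (forall i, `|b i| <= 1) -> (forall i, (j <= i)%N -> b i = 1) ->
  `|\sum_(i < N) (b i * g i) *: x i| <= `|\sum_(i < N) g i *: x i|.
Proof.
elim: j b => [|j IH] b b_le1 b_eq1.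
  by under eq_bigr do rewrite b_eq1 // mul1r.
(* [b] is a convex combination of [b1] and of its sign change [b2] at [j]. *)
pose b1 i := if i == j then 1 else b i.
pose b2 i := if i == j then -1 else b i.
pose S c := \sum_(i < N) (c i * g i) *: x i.
have S1 : `|S b1| <= `|\sum_(i < N) g i *: x i|.
  apply: IH => i; rewrite /b1; first by case: eqP; rewrite ?normr1.
  by case: eqP => // /eqP ij ji; apply: b_eq1; rewrite ltn_neqAle eq_sym ij.
have S2 : `|S b2| <= `|S b1|.
  have := x_unc N (fun i => b1 i * g i) (fun i => i == j).
  congr (`|_| <= _); apply: eq_bigr => i _.
  by rewrite /b1 /b2; case: eqP => _; rewrite ?expr1 ?expr0 ?mul1r ?mulN1r ?mulNr.
have Sb : 2%:R *: S b = (1 + b j) *: S b1 + (1 - b j) *: S b2.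
  rewrite !scaler_sumr -big_split /=; apply: eq_bigr => i _.
  rewrite !scalerA -scalerDl; congr (_ *: _).
  by rewrite /b1 /b2; case: eqP => [->|_]; ring.
have /ler_normlP[bj_ge bj_le] := b_le1 j.
have bj_p : 0 <= 1 + b j by lra.
have bj_m : 0 <= 1 - b j by lra.
have := ler_normD ((1 + b j) *: S b1) ((1 - b j) *: S b2).
rewrite -Sb !normrZ (ger0_norm bj_p) (ger0_norm bj_m) ger0_norm //.
have := ler_wpM2l bj_p S1; have := ler_wpM2l bj_m (le_trans S2 S1).
rewrite /S; lra.
Qed.

Lemma unconditional_mul_le (K : R) (N : nat) (g b : nat -> R) : 0 <= K ->
  (forall i, `|b i| <= K) ->
  `|\sum_(i < N) (b i * g i) *: x i| <= K * `|\sum_(i < N) g i *: x i|.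
Proof.
rewrite le_eqVlt => /predU1P[<- b_le|K_gt0 b_le].
  rewrite mul0r big1 ?normr0 // => i _.
  by have := b_le i; rewrite normr_le0 => /eqP ->; rewrite mul0r scale0r.
pose b' i := if (i < N)%N then b i / K else 1.
have -> : \sum_(i < N) (b i * g i) *: x i = K *: \sum_(i < N) (b' i * g i) *: x i.
  rewrite scaler_sumr; apply: eq_bigr => i _.
  by rewrite scalerA /b' ltn_ord mulrA mulrCA divff ?gt_eqF ?mulr1.
rewrite normrZ gtr0_norm // ler_pM2l //; apply: (@unconditional_mul_le1 N).
  move=> i; rewrite /b'; case: ifP => _; last by rewrite normr1.
  by rewrite normrM normfV (gtr0_norm K_gt0) ler_pdivrMr // mul1r.
by move=> i iN; rewrite /b' ltnNge iN.
Qed.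

End Unconditional.

(** * Admissible families of intervals *)

(* A recursive form of admissibility with an explicit lower bound [L] on the first
   interval, for induction; [J_chain] and [Jd_chain] below correspond to
   [J_admissible] and [Jd_admissible]. *)
Section IntervalChain.
Variables (ok : pred (nat * nat)) (next : nat * nat -> nat).

Fixpoint interval_chain (L : nat) (s : seq (nat * nat)) : bool :=
  if s is p :: t then [&& (L <= p.1)%N, ok p & interval_chain (next p) t] else true.

Lemma interval_chain_le L L' s : (L' <= L)%N -> interval_chain L s -> interval_chain L' s.
Proof. by case: s => //= p t L'L /and3P[Lp -> ->]; rewrite (leq_trans L'L Lp). Qed.

Lemma interval_chain_sorted L s :
  interval_chain L s -> all ok s && sorted (fun p q => (next p <= q.1)%N) s.
Proof.
elim: s L => //= p t IH L /and3P[_ okp chain_t].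
have /andP[okt sortt] := IH _ chain_t.
by rewrite okp okt /=; case: t chain_t {IH okt} sortt => //= q t' /and3P[-> _ _] ->.
Qed.

Lemma sorted_interval_chain s :
  all ok s && sorted (fun p q => (next p <= q.1)%N) s -> interval_chain 0 s.
Proof.
case: s => // p t /andP[/andP[okp okt] sortt].
apply: (interval_chain_le (L := p.1)) => //.
elim: t p okp okt sortt => [|q t IH] p okp /=; first by rewrite leqnn okp.
move=> /andP[okq okt] /andP[pq sortt]; rewrite leqnn okp /= pq okq.
by case/and3P: (IH q okq okt sortt).
Qed.

End IntervalChain.

Local Notation J_chain := (interval_chain (fun p => p.1 <= p.2)%N (fun p => p.2.+1)).
Local Notation Jd_chain := (interval_chain (fun p => p.1 < p.2)%N (fun p => p.2)).

Lemma J_chain_admissible L s : J_chain L s -> J_admissible s.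
Proof. exact: interval_chain_sorted. Qed.

Lemma J_admissible_chain s : J_admissible s -> J_chain 0 s.
Proof. exact: sorted_interval_chain. Qed.

Lemma Jd_chain_admissible L s : Jd_chain L s -> Jd_admissible s.
Proof. exact: interval_chain_sorted. Qed.

Lemma Jd_admissible_chain s : Jd_admissible s -> Jd_chain 0 s.
Proof. exact: sorted_interval_chain. Qed.

Section SupportedSums.
Variables (V : nmodType) (g : nat -> V) (n : nat).
Hypothesis g_supp : forall i, (n <= i)%N -> g i = 0.

Lemma big_nat_supp j M : (n <= M)%N ->
  \sum_(j <= i < n) g i = \sum_(j <= i < M) g i.
Proof.
move=> nM; case: (leqP j n) => [jn|nj].
  rewrite [RHS](@big_cat_nat _ _ _ n) //= [X in _ = _ + X]big_nat_cond.
  by rewrite [X in _ = _ + X]big1 ?addr0 // => i /andP[/andP[ni _] _]; apply: g_supp.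
rewrite big_geq ?(ltnW nj) // big_nat_cond big1 // => i /andP[/andP[ji _] _].
by apply: g_supp; rewrite (leq_trans (ltnW nj) ji).
Qed.

Lemma big_cat_nat_supp k j : (k <= j)%N ->
  \sum_(k <= i < j) g i + \sum_(j <= i < n) g i = \sum_(k <= i < n) g i.
Proof.
move=> kj; rewrite (@big_nat_supp j (maxn n j)) ?leq_maxl //.
by rewrite (@big_nat_supp k (maxn n j)) ?leq_maxl // -big_cat_nat // leq_maxr.
Qed.

End SupportedSums.

Lemma J_chain_sum_le (R : numDomainType) (g : nat -> R) n L s :
  (forall i, (n <= i)%N -> g i = 0) -> (forall i, 0 <= g i) -> J_chain L s ->
  \sum_(p <- s) \sum_(p.1 <= i < p.2.+1) g i <= \sum_(L <= i < n) g i.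
Proof.
move=> g_supp g_ge0; elim: s L => [|p t IH] L /=.
  by rewrite big_nil => _; apply: sumr_ge0.
move=> /and3P[Lp p12 chain_t]; rewrite big_cons.
apply: le_trans (lerD (lexx _) (IH _ chain_t)) _.
rewrite (big_cat_nat_supp g_supp (leqW p12)) -(big_cat_nat_supp g_supp Lp).
by rewrite lerDr sumr_ge0.
Qed.

Lemma trunc_ge (R : realType) n (a : nat -> R) i : (n <= i)%N -> trunc n a i = 0.
Proof. by rewrite /trunc ltnNge => ->. Qed.

Lemma big_trunc_widen (R : realType) n N (b F : nat -> R) : (n <= N)%N ->
  \sum_(i < N) trunc n b i * F i = \sum_(i < n) b i * F i.
Proof.
move=> nN; rewrite (big_ord_widen N (fun i => b i * F i) nN) [RHS]big_mkcond.
by apply: eq_bigr => i _; rewrite /trunc; case: ifP; rewrite ?mul0r.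
Qed.

Section JNorm.
Variables (R : realType) (X : normedModType R) (x : nat -> X).
Hypothesis x_normed : normalized x.
Variables (b : nat -> R) (n : nat).
Hypothesis b_supp : forall i, (n <= i)%N -> b i = 0.

Lemma J_term_le_sum s : J_admissible s -> `|J_term x b s| <= \sum_(i < n) `|b i|.
Proof.
move=> /J_admissible_chain chain_s; rewrite -(big_mkord xpredT (fun i => `|b i|)).
have abs_b_supp i : (n <= i)%N -> `|b i| = 0 by move=> ni; rewrite b_supp ?normr0.
apply: le_trans (ler_norm_sum _ _ _) _.
apply: le_trans (J_chain_sum_le abs_b_supp (fun i => normr_ge0 (b i)) chain_s).
by apply: ler_sum => p _; rewrite normrZ x_normed mulr1 ler_norm_sum.
Qed.

Lemma has_sup_J : has_sup [set `|J_term x b s| | s in [set s | J_admissible s]].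
Proof.
split; first by exists `|J_term x b [::]|, [::].
by exists (\sum_(i < n) `|b i|) => _ [s adm_s <-]; apply: J_term_le_sum.
Qed.

Lemma J_term_le_norm s : J_admissible s -> `|J_term x b s| <= J_norm x b.
Proof. by move=> adm_s; apply: (sup_upper_bound has_sup_J); exists s. Qed.

Lemma J_norm_ge0 : 0 <= J_norm x b.
Proof. exact: le_trans (normr_ge0 _) (J_term_le_norm (s := [::]) isT). Qed.

Lemma J_norm_le_sum : J_norm x b <= \sum_(i < n) `|b i|.
Proof.
apply: ge_sup; first by exists `|J_term x b [::]|, [::].
by move=> _ [s adm_s <-]; apply: J_term_le_sum.
Qed.

End JNorm.

Section JdNorm.
Variables (R : realType) (X : normedModType R) (x : nat -> X).

Lemma Jd_termE (a : nat -> R) L s : Jd_chain L s ->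
  Jd_term x a s = J_term x (fun i => a i - a i.+1) [seq (p.1, p.2.-1) | p <- s].
Proof.
rewrite /Jd_term /J_term big_map; elim: s L => [|p t IH] L /=; first by rewrite !big_nil.
move=> /and3P[_ p12 chain_t]; rewrite !big_cons (IH _ chain_t) /=.
rewrite prednK ?(leq_ltn_trans (leq0n _) p12) //; congr (_ *: _ + _).
rewrite (eq_bigr (fun i => - (a i.+1 - a i))) => [|i _]; last by rewrite opprB.
by rewrite sumrN telescope_sumr ?opprB // ltnW.
Qed.

Lemma Jd_chain_pred_end L s :
  Jd_chain L s -> J_chain L [seq (p.1, p.2.-1) | p <- s].
Proof.
elim: s L => //= p t IH L /and3P[-> p12 /IH chain_t].
by rewrite -ltnS prednK ?p12 // (leq_ltn_trans (leq0n _) p12).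
Qed.

Lemma J_chain_succ_end L s :
  J_chain L s -> Jd_chain L [seq (p.1, p.2.+1) | p <- s].
Proof. by elim: s L => //= p t IH L /and3P[-> p12 /IH chain_t]; rewrite ltnS p12. Qed.

Lemma Jd_normE (a : nat -> R) : Jd_norm x a = J_norm x (fun i => a i - a i.+1).
Proof.
congr sup; apply/seteqP; split => _ [s adm_s <-].
  have chain_s := Jd_admissible_chain adm_s.
  exists [seq (p.1, p.2.-1) | p <- s]; last by rewrite (Jd_termE a chain_s).
  exact: J_chain_admissible (Jd_chain_pred_end chain_s).
have chain_s := J_chain_succ_end (J_admissible_chain adm_s).
exists [seq (p.1, p.2.+1) | p <- s]; first exact: Jd_chain_admissible chain_s.
by rewrite (Jd_termE a chain_s) -map_comp map_id_in // => -[].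
Qed.

End JdNorm.

Section Leibniz.
Variables (R : realType) (X : normedModType R) (x : nat -> X).

Fixpoint start_coef (F : nat * nat -> R) (s : seq (nat * nat)) (i : nat) : R :=
  if s is p :: t then (if i == p.1 then F p else start_coef F t i) else 0.

Lemma start_coef_lt F L s i : Jd_chain L s -> (i < L)%N -> start_coef F s i = 0.
Proof.
elim: s L => //= p t IH L /and3P[Lp p12 chain_t] iL.
rewrite ltn_eqF ?(leq_trans iL Lp) //; apply: (IH _ chain_t).
exact: ltn_trans (leq_trans iL Lp) p12.
Qed.

Lemma big_start_coef F L s N : Jd_chain L s -> all (fun p => p.1 < N)%N s ->
  \sum_(p <- s) F p *: x p.1 = \sum_(i < N) start_coef F s i *: x i.
Proof.
elim: s L => [|p t IH] L /=.
  by move=> _ _; rewrite big_nil big1 // => i _; rewrite scale0r.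
move=> /and3P[_ p12 chain_t] /andP[pN tN]; rewrite big_cons (IH _ chain_t tN).
rewrite [RHS](bigD1 (Ordinal pN)) //= eqxx [X in _ + X = _](bigD1 (Ordinal pN)) //=.
rewrite (start_coef_lt _ chain_t p12) scale0r add0r; congr (_ + _).
apply: eq_bigr => i /negbTE ip; suff -> : (i == p.1 :> nat) = false by [].
by apply: contraFF ip => /eqP ip; apply/eqP/val_inj.
Qed.

Lemma start_coefM F G s i :
  start_coef (fun p => F p * G p) s i = start_coef F s i * start_coef G s i.
Proof. by elim: s => [|p t IH] /=; [rewrite mul0r | case: eqP]. Qed.

Lemma start_coef_le F K s i : 0 <= K -> (forall p, `|F p| <= K) ->
  `|start_coef F s i| <= K.
Proof. by move=> K_ge0 F_le; elim: s => [|p t IH] /=; [rewrite normr0 | case: eqP]. Qed.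

Hypothesis x_unc : one_unconditional x.

Lemma Jd_chain_mul_le (a c : nat * nat -> R) K L s : Jd_chain L s -> 0 <= K ->
  (forall p, `|a p| <= K) ->
  `|\sum_(p <- s) (a p * c p) *: x p.1| <= K * `|\sum_(p <- s) c p *: x p.1|.
Proof.
move=> chain_s K_ge0 a_le.
have [N sN] : exists N, all (fun p => p.1 < N)%N s.
  elim: s {chain_s} => [|p t [N tN]]; first by exists 0%N.
  exists (maxn p.1.+1 N); rewrite /= leq_max ltnSn /=.
  by apply: sub_all tN => q /= qN; rewrite leq_max qN orbT.
rewrite (big_start_coef _ chain_s sN) (big_start_coef c chain_s sN).
under eq_bigr do rewrite start_coefM.
by apply: unconditional_mul_le => // i; apply: start_coef_le.
Qed.

Lemma Jd_term_mul_le (A B : nat -> R) KA KB L s : Jd_chain L s ->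
  0 <= KA -> 0 <= KB -> (forall i, `|A i| <= KA) -> (forall i, `|B i| <= KB) ->
  `|Jd_term x (fun i => A i * B i) s| <=
  KA * `|Jd_term x B s| + KB * `|Jd_term x A s|.
Proof.
move=> chain_s KA_ge0 KB_ge0 A_le B_le.
have -> : Jd_term x (fun i => A i * B i) s =
    \sum_(p <- s) (A p.1 * (B p.1 - B p.2)) *: x p.1 +
    \sum_(p <- s) (B p.2 * (A p.1 - A p.2)) *: x p.1.
  rewrite /Jd_term -big_split /=; apply: eq_bigr => p _.
  by rewrite -scalerDl; congr (_ *: _); ring.
apply: le_trans (ler_normD _ _) _; apply: lerD.
  exact: (Jd_chain_mul_le (a := fun p => A p.1) (fun p => B p.1 - B p.2) chain_s).
exact: (Jd_chain_mul_le (a := fun p => B p.2) (fun p => A p.1 - A p.2) chain_s).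
Qed.

End Leibniz.

Section JdProduct.
Variables (R : realType) (X : normedModType R) (x : nat -> X).
Hypotheses (x_normed : normalized x) (x_unc : one_unconditional x).

Section Supported.
Variables (A : nat -> R) (n : nat).
Hypothesis A_supp : forall i, (n <= i)%N -> A i = 0.

Lemma Jd_term_le_norm s : Jd_admissible s -> `|Jd_term x A s| <= Jd_norm x A.
Proof.
move=> /Jd_admissible_chain chain_s; rewrite (Jd_termE x A chain_s) Jd_normE.
apply: (J_term_le_norm x_normed (n := n)).
  by move=> i ni; rewrite !A_supp ?subrr // (leq_trans ni).
exact: J_chain_admissible (Jd_chain_pred_end chain_s).
Qed.

Lemma abs_le_Jd_norm k : `|A k| <= Jd_norm x A.
Proof.
have adm_k : Jd_admissible [:: (k, (k + n).+1)].
  by rewrite /Jd_admissible /= ltnS leq_addr.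
have := Jd_term_le_norm adm_k; rewrite /Jd_term big_seq1 normrZ x_normed mulr1 /=.
by rewrite (@A_supp (k + n).+1) ?subr0 // ltnW // ltnS leq_addl.
Qed.

End Supported.

Lemma Jd_norm_mul_le (A B : nat -> R) n :
  (forall i, (n <= i)%N -> A i = 0) -> (forall i, (n <= i)%N -> B i = 0) ->
  Jd_norm x (fun i => A i * B i) <= 2 * Jd_norm x A * Jd_norm x B.
Proof.
move=> A_supp B_supp; set KA := Jd_norm x A; set KB := Jd_norm x B.
have KA_ge0 : 0 <= KA by apply: le_trans (abs_le_Jd_norm A_supp 0).
have KB_ge0 : 0 <= KB by apply: le_trans (abs_le_Jd_norm B_supp 0).
apply: ge_sup; first by exists `|Jd_term x (fun i => A i * B i) [::]|, [::].
move=> _ [s adm_s <-].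
have := Jd_term_mul_le x_unc (Jd_admissible_chain adm_s) KA_ge0 KB_ge0
  (abs_le_Jd_norm A_supp) (abs_le_Jd_norm B_supp).
have := ler_wpM2l KA_ge0 (Jd_term_le_norm B_supp adm_s).
have := ler_wpM2l KB_ge0 (Jd_term_le_norm A_supp adm_s).
rewrite -/KA -/KB; lra.
Qed.

End JdProduct.

Section Clip.
Variables (R : realType) (X : normedModType R) (x : nat -> X).

Fixpoint clip (N M : nat) (s : seq (nat * nat)) : seq (nat * nat) :=
  if s is p :: t then
    if (N < p.1)%N then [::]
    else if (N <= p.2)%N then [:: (p.1, M)] else p :: clip N M t
  else [::].

Lemma J_term_cons (a : nat -> R) p t :
  J_term x a (p :: t) = (\sum_(p.1 <= i < p.2.+1) a i) *: x p.1 + J_term x a t.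
Proof. by rewrite /J_term big_cons. Qed.

Lemma J_chain_clip N M L s : (N <= M)%N -> J_chain L s -> J_chain L (clip N M s).
Proof.
move=> NM; elim: s L => //= p t IH L /and3P[Lp p12 chain_t].
case: ltnP => // p1N; case: leqP => [Np2|p2N] /=; first by rewrite Lp (leq_trans p1N NM).
by rewrite Lp p12 IH.
Qed.

Lemma J_term_eq0 (q : nat -> R) N L s : (forall j, (N < j)%N -> q j = 0) ->
  J_chain L s -> (N < L)%N -> J_term x q s = 0.
Proof.
rewrite /J_term => q0; elim: s L => [|p t IH] L /=; first by rewrite big_nil.
move=> /and3P[Lp p12 chain_t] NL; rewrite big_cons (IH _ chain_t); last first.
  by rewrite ltnS (leq_trans (ltnW (leq_trans NL Lp)) p12).
rewrite big_nat_cond big1 ?scale0r ?addr0 // => i /andP[/andP[p1i _] _].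
by apply: q0; apply: leq_trans (leq_trans NL Lp) p1i.
Qed.

Variables (b q : nat -> R) (N M : nat).
Hypotheses (qb : forall j, (j < N)%N -> q j = b j)
  (qN : q N = \sum_(N <= i < M.+1) b i) (q0 : forall j, (N < j)%N -> q j = 0)
  (NM : (N <= M)%N).

Lemma J_term_clip L s : J_chain L s -> J_term x q s = J_term x b (clip N M s).
Proof.
elim: s L => [|p t IH] L /=; first by rewrite /J_term !big_nil.
move=> /and3P[Lp p12 chain_t].
case: ltnP => [Np1|p1N].
  by rewrite (@J_term_eq0 q N p.1) /= ?leqnn ?p12 // /J_term big_nil.
case: leqP => [Np2|p2N]; rewrite !J_term_cons; last first.
  rewrite (IH _ chain_t); congr (_ *: _ + _).
  by apply: eq_big_nat => i /andP[_ ip2]; apply: qb; apply: leq_trans ip2 p2N.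
rewrite (@J_term_eq0 q N p.2.+1 t) // ?ltnS // /J_term big_nil !addr0 /=.
congr (_ *: _).
rewrite (@big_cat_nat _ _ _ N) ?(leqW Np2) //= [RHS](@big_cat_nat _ _ _ N) ?(leqW NM) //=.
rewrite [X in _ + X = _]big_ltn ?ltnS // qN [X in _ + (_ + X) = _]big_nat_cond.
rewrite [X in _ + (_ + X) = _]big1 ?addr0 => [|i /andP[/andP[Ni _] _]]; last exact: q0.
by congr (_ + _); apply: eq_big_nat => i /andP[_ iN]; apply: qb.
Qed.

End Clip.

(** * Bounded linear functionals *)

Section BoundedLinear.
Variables (R : realType) (V : normedModType R).
Implicit Types (f g : V -> R) (y z : V).

Lemma blinear0 f : bdd_linear f -> f 0 = 0.
Proof.
case=> lin _; have := lin 1 0 0.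
by rewrite scale1r addr0 mul1r -{1}[f 0]addr0 => /addrI/esym.
Qed.

Lemma blinearZ f c y : bdd_linear f -> f (c *: y) = c * f y.
Proof. by move=> lin_f; rewrite -[c *: y]addr0 lin_f.1 blinear0 // addr0. Qed.

Lemma blinearD f y z : bdd_linear f -> f (y + z) = f y + f z.
Proof. by case=> lin _; rewrite -{1}[y]scale1r lin mul1r. Qed.

Lemma blinearB f y z : bdd_linear f -> f (y - z) = f y - f z.
Proof. by move=> lin_f; rewrite blinearD // -scaleN1r blinearZ // mulN1r. Qed.

Lemma blinear_sum f (I : Type) (r : seq I) (a : I -> R) (u : I -> V) :
  bdd_linear f -> f (\sum_(i <- r) a i *: u i) = \sum_(i <- r) a i * f (u i).
Proof.
move=> lin_f; elim: r => [|i r IH]; first by rewrite !big_nil blinear0.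
by rewrite !big_cons blinearD // blinearZ // IH.
Qed.

Lemma bdd_linear_bound f : bdd_linear f ->
  exists C, 0 <= C /\ forall y, `|f y| <= C * `|y|.
Proof.
case=> _ [C f_le]; exists (Num.max C 0); rewrite le_max lexx orbT; split => // y.
by apply: le_trans (f_le y) _; rewrite ler_wpM2r // le_max lexx.
Qed.

Lemma bdd_linearD f g : bdd_linear f -> bdd_linear g ->
  bdd_linear (fun y => f y + g y).
Proof.
move=> lin_f lin_g; split => [c y z|]; first by rewrite lin_f.1 lin_g.1; ring.
have [Cf [_ f_le]] := bdd_linear_bound lin_f.
have [Cg [_ g_le]] := bdd_linear_bound lin_g.
by exists (Cf + Cg) => y; rewrite mulrDl (le_trans (ler_normD _ _)) ?lerD.
Qed.

Lemma bdd_linearZ c f : bdd_linear f -> bdd_linear (fun y => c * f y).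
Proof.
move=> lin_f; split => [d y z|]; first by rewrite lin_f.1; ring.
have [C [_ f_le]] := bdd_linear_bound lin_f.
by exists (`|c| * C) => y; rewrite normrM -mulrA ler_wpM2l.
Qed.

Lemma bdd_linearB f g : bdd_linear f -> bdd_linear g ->
  bdd_linear (fun y => f y - g y).
Proof.
move=> lin_f lin_g; have := bdd_linearD lin_f (bdd_linearZ (-1) lin_g).
by congr bdd_linear; apply: funext => y; rewrite mulN1r.
Qed.

Lemma bdd_linear_sum (I : Type) (r : seq I) (F : I -> V -> R) :
  (forall i, bdd_linear (F i)) -> bdd_linear (fun y => \sum_(i <- r) F i y).
Proof.
move=> lin_F; elim: r => [|i r IH].
  under eq_fun do rewrite big_nil.
  by split => [*|]; [ring | exists 0 => y; rewrite normr0 mul0r].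
under eq_fun do rewrite big_cons.
exact: bdd_linearD.
Qed.

Lemma has_sup_dnorm f : bdd_linear f ->
  has_sup [set `|f y| | y in [set y | `|y| <= 1]].
Proof.
move=> lin_f; have [C [C_ge0 f_le]] := bdd_linear_bound lin_f.
split; first by exists `|f 0|, 0; rewrite //= normr0.
exists C => _ [y y_le1 <-]; apply: le_trans (f_le y) _.
by rewrite -{2}[C]mulr1 ler_wpM2l.
Qed.

Lemma dnorm_ub f y : bdd_linear f -> `|y| <= 1 -> `|f y| <= dnorm f.
Proof.
by move=> lin_f y_le1; apply: (sup_upper_bound (has_sup_dnorm lin_f)); exists y.
Qed.

Lemma dnorm_le f K : (forall y, `|y| <= 1 -> `|f y| <= K) -> dnorm f <= K.
Proof.
move=> f_le; apply: ge_sup; first by exists `|f 0|, 0; rewrite //= normr0.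
by move=> _ [y y_le1 <-]; apply: f_le.
Qed.

Lemma ge0_dnorm f : bdd_linear f -> 0 <= dnorm f.
Proof. by move=> lin_f; apply: le_trans (dnorm_ub (y := 0) lin_f _); rewrite ?normr0. Qed.

Lemma ler_dnorm f y : bdd_linear f -> `|f y| <= dnorm f * `|y|.
Proof.
move=> lin_f; have [->|y0] := eqVneq y 0; first by rewrite blinear0 // !normr0 mulr0.
have ny_gt0 : 0 < `|y| by rewrite normr_gt0.
have := dnorm_ub (y := `|y|^-1 *: y) lin_f.
rewrite normrZ normfV normr_id mulVf ?gt_eqF // lexx blinearZ // normrM normfV normr_id.
by rewrite -ler_pdivrMr // mulrC => /(_ isT).
Qed.

End BoundedLinear.


(** * The functionals v_i on J(X) *)

Section Jamesification.
Variables (R : realType) (X : normedModType R) (x : nat -> X)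
  (JX : normedModType R) (e : nat -> JX) (s : JX -> R) (estar : nat -> JX -> R).
Hypotheses (x_normed : normalized x) (x_unc : one_unconditional x)
  (e_norm : forall (n : nat) (a : nat -> R),
     `|\sum_(i < n) a i *: e i| = J_norm x (trunc n a))
  (e_dense : forall (y : JX) (eps : R), 0 < eps ->
     exists (n : nat) (a : nat -> R), `|y - \sum_(i < n) a i *: e i| < eps)
  (s_lin : bdd_linear s) (s_e : forall j, s (e j) = 1)
  (estar_lin : forall i, bdd_linear (estar i))
  (estar_e : forall i j, estar i (e j) = (i == j)%:R).

Local Notation v := (vseq s estar).
Local Notation efin n a := (\sum_(i < n) a i *: e i).

Lemma bdd_linear_vseq k : bdd_linear (v k).
Proof. by apply: bdd_linearB => //; apply: bdd_linear_sum. Qed.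

Lemma estar_efin j n (a : nat -> R) : estar j (efin n a) = trunc n a j.
Proof.
rewrite blinear_sum // /trunc; elim: n => [|n IH]; first by rewrite big_ord0.
rewrite big_ord_recr /= IH estar_e.
case: ltngtP => [jn|nj|->]; rewrite ?mulr0 ?addr0 ?mulr1 ?add0r ?ltnSn //.
  by rewrite ltnS ltnW.
by rewrite ltnS leqNgt nj.
Qed.

Lemma vseq_efin k n (a : nat -> R) : v k (efin n a) = \sum_(k <= j < n) trunc n a j.
Proof.
have a_supp := @trunc_ge R n a; rewrite /vseq.
have -> : s (efin n a) = \sum_(0 <= j < n) trunc n a j.
  rewrite blinear_sum // big_mkord.
  by apply: eq_bigr => i _; rewrite s_e mulr1 /trunc ltn_ord.
have -> : \sum_(j < k) estar j (efin n a) = \sum_(0 <= j < k) trunc n a j.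
  by rewrite big_mkord; apply: eq_bigr => j _; rewrite estar_efin.
by rewrite -(big_cat_nat_supp a_supp (leq0n k)) addrAC subrr add0r.
Qed.

Lemma vseq_efinB k m n (a : nat -> R) : (k <= m.+1)%N ->
  v k (efin n a) - v m.+1 (efin n a) = \sum_(k <= i < m.+1) trunc n a i.
Proof.
by move=> km; rewrite !vseq_efin -(big_cat_nat_supp (@trunc_ge R n a) km) addrK.
Qed.

Lemma vseq_e i j : v i (e j) = (i <= j)%:R.
Proof.
rewrite /vseq; have -> : \sum_(k < i) estar k (e j) = (j < i)%:R.
  elim: i => [|i IH]; first by rewrite big_ord0.
  rewrite big_ord_recr /= IH estar_e.
  case: (ltngtP j i) => [ji|ij|->]; last by rewrite ltnSn add0r.
    by rewrite ltnS (ltnW ji) addr0.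
  by rewrite ltnS leqNgt ij addr0.
by rewrite s_e ltnNge; case: leqP; rewrite ?subrr ?subr0.
Qed.

Lemma le_norm_dense (F : JX -> R) (K : R) : 0 <= K ->
  (forall y z, F y <= F z + K * `|y - z|) ->
  (forall n (a : nat -> R), F (efin n a) <= `|efin n a|) -> forall y, F y <= `|y|.
Proof.
move=> K_ge0 F_lip F_efin y; apply/ler_addgt0Pr => eps eps_gt0.
have [n [a ya]] := e_dense y (divr_gt0 eps_gt0 (ltr_wpDl K_ge0 ltr01)).
have := F_lip y (efin n a); have := F_efin n a.
have : `|efin n a| <= `|y| + `|y - efin n a|.
  by have := ler_normD y (efin n a - y); rewrite addrCA subrr addr0 distrC.
have : (K + 1) * `|y - efin n a| <= eps.
  by rewrite -ler_pdivlMl ?ltr_wpDl // mulrC ltW.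
nra.
Qed.

Section FiniteRank.
Variables (W : normedModType R) (I : Type) (r : seq I).
Variables (F : I -> JX -> R) (g : I -> W).
Hypothesis F_lin : forall i, bdd_linear (F i).

Lemma finite_rank_le_norm :
  (forall n (a : nat -> R), `|\sum_(i <- r) F i (efin n a) *: g i| <= `|efin n a|) ->
  forall y, `|\sum_(i <- r) F i y *: g i| <= `|y|.
Proof.
move=> T_efin.
have [K [K_ge0 T_le]] : exists K, 0 <= K /\
    forall y, `|\sum_(i <- r) F i y *: g i| <= K * `|y|.
  elim: r {T_efin} => [|i t [K [K_ge0 T_le]]].
    by exists 0; split => // y; rewrite big_nil normr0 mul0r.
  have [C [C_ge0 F_le]] := bdd_linear_bound (F_lin i).
  exists (C * `|g i| + K); split => [|y]; first by rewrite addr_ge0 ?mulr_ge0.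
  rewrite big_cons mulrDl (le_trans (ler_normD _ _)) // lerD // normrZ.
  by rewrite mulrAC ler_wpM2r.
apply: (le_norm_dense K_ge0) => // y z.
rewrite -lerBlDl (le_trans (lerB_dist _ _)) // -sumrB.
under eq_bigr do rewrite -scalerBl -blinearB //.
exact: T_le.
Qed.

End FiniteRank.

Lemma norm_vseq_le k y : `|v k y| <= `|y|.
Proof.
suff: `|\sum_(i <- [:: k]) v i y *: x i| <= `|y|.
  by rewrite big_seq1 normrZ x_normed mulr1.
apply: finite_rank_le_norm => [i|n a]; first exact: bdd_linear_vseq.
rewrite big_seq1 normrZ x_normed mulr1 vseq_efin e_norm.
have [kn|nk] := ltnP k n; last first.
  by rewrite big_geq // normr0 (J_norm_ge0 x_normed (@trunc_ge R n a)).
have adm_kn : J_admissible [:: (k, n)] by rewrite /J_admissible /= andbT ltnW.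
have := J_term_le_norm x_normed (@trunc_ge R n a) adm_kn.
rewrite J_term_cons /J_term big_nil addr0 normrZ x_normed mulr1.
by rewrite big_nat_recr ?trunc_ge //= ?addr0 // ltnW.
Qed.

Definition Jterm_op (s0 : seq (nat * nat)) (y : JX) : X :=
  \sum_(p <- s0) (v p.1 y - v p.2.+1 y) *: x p.1.

Lemma Jterm_op_efin s0 n (a : nat -> R) : J_admissible s0 ->
  Jterm_op s0 (efin n a) = J_term x (trunc n a) s0.
Proof.
move=> /andP[s0_ok _]; rewrite /Jterm_op /J_term big_seq_cond [RHS]big_seq_cond.
apply: eq_bigr => p /andP[p_s0 _]; rewrite vseq_efinB //.
by apply: leqW; apply: (allP s0_ok).
Qed.

Lemma norm_Jterm_op_le s0 y : J_admissible s0 -> `|Jterm_op s0 y| <= `|y|.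
Proof.
move=> adm_s0.
apply: (finite_rank_le_norm (W := X) (F := fun p y => v p.1 y - v p.2.+1 y)).
  by move=> p; apply: bdd_linearB; apply: bdd_linear_vseq.
move=> n a; rewrite -/(Jterm_op s0 _) Jterm_op_efin // e_norm.
exact (J_term_le_norm x_normed (@trunc_ge R n a) adm_s0).
Qed.

Definition collapse_coef (N : nat) (y : JX) (j : nat) : R :=
  if (j < N)%N then estar j y else v N y.

Definition collapse (N : nat) (y : JX) : JX := efin N.+1 (collapse_coef N y).

(* Collapsing coordinates [N..M] of a finite sum into coordinate [N] only merges
   intervals of an admissible family ([clip]). *)
Lemma norm_collapse_le N y : `|collapse N y| <= `|y|.
Proof.
apply: (finite_rank_le_norm (r := index_enum 'I_N.+1)
  (F := fun j y => collapse_coef N y j)).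
  move=> j; rewrite /collapse_coef.
  by case: (j < N)%N; [apply: estar_lin | apply: bdd_linear_vseq].
move=> n a; set c := collapse_coef N (efin n a).
rewrite -/(efin N.+1 c) !e_norm; apply: ge_sup.
  by exists `|J_term x (trunc N.+1 c) [::]|, [::].
move=> _ [s0 adm_s0 <-].
have cb j : (j < N)%N -> trunc N.+1 c j = trunc n a j.
  by move=> jN; rewrite /trunc ltnS (ltnW jN) /c /collapse_coef jN estar_efin.
have cN : trunc N.+1 c N = \sum_(N <= i < (n + N).+1) trunc n a i.
  rewrite /trunc ltnSn /c /collapse_coef ltnn vseq_efin.
  rewrite (big_nat_supp (@trunc_ge R n a) N (_ : n <= (n + N).+1)%N) //.
  by rewrite leqW // leq_addr.
have c0 j : (N < j)%N -> trunc N.+1 c j = 0 by move=> Nj; rewrite trunc_ge.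
have chain_s0 := J_admissible_chain adm_s0.
rewrite (J_term_clip x cb cN c0 (leq_addl n N) chain_s0).
exact (J_term_le_norm x_normed (@trunc_ge R n a)
  (J_chain_admissible (J_chain_clip (leq_addl n N) chain_s0))).
Qed.

Lemma vseq_split i N y : (i <= N)%N ->
  v i y = v N y + \sum_(i <= j < N) estar j y.
Proof.
move=> iN; rewrite /vseq -addrA; congr (_ + _).
have -> : \sum_(j < N) estar j y = \sum_(j < i) estar j y + \sum_(i <= j < N) estar j y.
  by rewrite -!(big_mkord xpredT (fun j => estar j y)) -big_cat_nat.
by rewrite opprD subrK.
Qed.

Lemma vseq_collapse i N y : v i (collapse N y) = if (i <= N)%N then v i y else 0.
Proof.
rewrite vseq_efin; case: leqP => [iN|Ni]; last by rewrite big_geq.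
rewrite big_nat_recr /= ?(leq_trans iN) // /trunc /collapse_coef ltnSn ltnn.
rewrite (vseq_split y iN) addrC; congr (_ + _).
by apply: eq_big_nat => j /andP[_ jN]; rewrite ltnS (ltnW jN) jN.
Qed.

Lemma estar_collapse j N y : (j < N)%N -> estar j (collapse N y) = estar j y.
Proof. by move=> jN; rewrite estar_efin /trunc /collapse_coef ltnS (ltnW jN) jN. Qed.

Lemma s_collapse N y : s (collapse N y) = s y.
Proof.
have vseq0 z : v 0 z = s z by rewrite /vseq big_ord0 subr0.
by rewrite -vseq0 vseq_collapse vseq0.
Qed.

Lemma bdd_linear_fcomb n (a : nat -> R) : bdd_linear (fcomb n a v).
Proof. by apply: bdd_linear_sum => i; apply: bdd_linearZ; apply: bdd_linear_vseq. Qed.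

Lemma fcomb_collapse m n (a : nat -> R) y : (m <= n)%N ->
  fcomb m.+1 a v y = fcomb n.+1 a v (collapse m y).
Proof.
move=> mn; rewrite /fcomb (big_ord_widen n.+1 (fun i => a i * v i y)) ?ltnS //.
rewrite big_mkcond; apply: eq_bigr => i _; rewrite vseq_collapse ltnS.
by case: leqP; rewrite ?mulr0.
Qed.

Lemma dnorm_fcomb_mono m n (a : nat -> R) : (m <= n)%N ->
  dnorm (fcomb m a v) <= dnorm (fcomb n a v).
Proof.
case: m => [|m] mn.
  apply: dnorm_le => y _; rewrite /fcomb big_ord0 normr0.
  exact (ge0_dnorm (bdd_linear_fcomb n a)).
case: n mn => [//|n]; rewrite ltnS => mn; apply: dnorm_le => y y_le1.
rewrite (fcomb_collapse a y mn); apply: dnorm_ub; first exact: bdd_linear_fcomb.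
exact: le_trans (norm_collapse_le m y) y_le1.
Qed.

Lemma fcomb_jdiff_collapse f N y : bdd_linear f ->
  fcomb N.+1 (fun i => f (jdiff e i)) v y = f (collapse N y).
Proof.
move=> lin_f.
have f_collapse M :
    f (collapse M y) = \sum_(j < M) estar j y * f (e j) + v M y * f (e M).
  rewrite blinear_sum // big_ord_recr /= /collapse_coef ltnn; congr (_ + _).
  by apply: eq_bigr => j _; rewrite ltn_ord.
elim: N => [|N IH]; first by rewrite /fcomb big_ord1 f_collapse big_ord0 add0r mulrC.
have -> : fcomb N.+2 (fun i => f (jdiff e i)) v y =
    fcomb N.+1 (fun i => f (jdiff e i)) v y + f (jdiff e N.+1) * v N.+1 y.
  by rewrite /fcomb big_ord_recr.
rewrite IH !f_collapse big_ord_recr /= (vseq_split y (leqnSn N)) big_nat1 blinearB //.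
ring.
Qed.

Lemma expansion_jdiff f : Jstar s estar f -> expansion v f (fun i => f (jdiff e i)).
Proof.
case=> lin_f [c f_approx]; apply/cvgr0Pnorm_lt => eps eps_gt0.
have [n [b h_lt]] := f_approx (eps / 3%:R) (divr_gt0 eps_gt0 (ltr0Sn _ _)).
set h := fun y => f y - c * s y - \sum_(i < n) b i * estar i y.
have lin_h : bdd_linear h.
  apply: bdd_linearB; first by apply: bdd_linearB => //; apply: bdd_linearZ.
  by apply: bdd_linear_sum => i; apply: bdd_linearZ.
exists n.+1 => // -[//|M] /= nM.
(* [collapse M] fixes [s] and the [estar i], [i < n]. *)
have h_collapse y : f y - f (collapse M y) = h y - h (collapse M y).
  rewrite /h s_collapse.
  have -> : \sum_(i < n) b i * estar i (collapse M y) = \sum_(i < n) b i * estar i y.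
    by apply: eq_bigr => i _; rewrite estar_collapse // (leq_trans (ltn_ord i) nM).
  ring.
rewrite ger0_norm; last first.
  by apply: ge0_dnorm; apply: bdd_linearB => //; apply: bdd_linear_fcomb.
have : dnorm (fun y => f y - fcomb M.+1 (fun i => f (jdiff e i)) v y) <=
        dnorm h + dnorm h.
  apply: dnorm_le => y y_le1; rewrite fcomb_jdiff_collapse // h_collapse.
  apply: le_trans (ler_normB _ _) _; apply: lerD; apply: dnorm_ub => //.
  exact: le_trans (norm_collapse_le M y) y_le1.
move: h_lt; rewrite -/h; lra.
Qed.

Lemma norm_e j : `|e j| = 1.
Proof.
have e_efin : e j = efin j.+1 (fun i : nat => (i == j)%:R).
  rewrite big_ord_recr /= eqxx scale1r big1 ?add0r // => i _.
  by rewrite (ltn_eqF (ltn_ord i)) scale0r.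
apply/eqP; rewrite eq_le; apply/andP; split; last first.
  by have := norm_vseq_le j (e j); rewrite vseq_e leqnn normr1.
rewrite e_efin (e_norm _ (fun i : nat => (i == j)%:R)).
rewrite (le_trans (J_norm_le_sum x_normed (@trunc_ge R j.+1 _))) //.
rewrite big_ord_recr /= /trunc ltnSn eqxx normr1 big1 ?add0r // => i _.
by rewrite ltnS (ltnW (ltn_ord i)) (ltn_eqF (ltn_ord i)) normr0.
Qed.

Lemma fcomb_e N (a : nat -> R) j : (j < N)%N ->
  fcomb N a v (e j) = \sum_(i < j.+1) a i.
Proof.
move=> jN; rewrite /fcomb (big_ord_widen N a jN) [RHS]big_mkcond.
by apply: eq_bigr => i _; rewrite vseq_e ltnS; case: leqP; rewrite ?mulr1 ?mulr0.
Qed.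

Lemma expansion_partial_sum f (a : nat -> R) : bdd_linear f -> expansion v f a ->
  forall j, \sum_(i < j.+1) a i = f (e j).
Proof.
move=> lin_f f_exp j; apply/eqP; rewrite -subr_eq0 -normr_le0.
apply/ler_addgt0Pr => eps eps_gt0; rewrite add0r.
have [N0 _ N0_lt] := (cvgr0Pnorm_lt _).1 f_exp eps eps_gt0.
have N_lt := N0_lt (maxn N0 j.+1) (leq_maxl _ _).
have lin_d : bdd_linear (fun y => f y - fcomb (maxn N0 j.+1) a v y).
  by apply: bdd_linearB => //; apply: bdd_linear_fcomb.
have := dnorm_ub (y := e j) lin_d; rewrite norm_e lexx fcomb_e ?leq_maxr // distrC.
move=> /(_ isT) /le_trans; apply; apply: ltW; apply: le_lt_trans N_lt.
exact: ler_norm.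
Qed.

Lemma expansion_unique f (a : nat -> R) : bdd_linear f -> expansion v f a ->
  a = fun i => f (jdiff e i).
Proof.
move=> lin_f f_exp; apply: funext => -[|j] /=.
  by have := expansion_partial_sum lin_f f_exp 0; rewrite big_ord1.
rewrite blinearB // -(expansion_partial_sum lin_f f_exp j.+1).
by rewrite -(expansion_partial_sum lin_f f_exp j) big_ord_recr /= addrC addrK.
Qed.

Lemma coef_vseqE f : Jstar s estar f -> coef v f = fun i => f (jdiff e i).
Proof.
move=> Js_f; apply: expansion_unique Js_f.1 _.
by apply: epsilon_spec; exists (fun i => f (jdiff e i)); apply: expansion_jdiff.
Qed.

Lemma dnorm_vseq i : dnorm (v i) = 1.
Proof.
apply/eqP; rewrite eq_le; apply/andP; split.
  by apply: dnorm_le => y y_le1; apply: le_trans (norm_vseq_le i y) y_le1.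
have := dnorm_ub (y := e i) (bdd_linear_vseq i).
by rewrite norm_e lexx vseq_e leqnn normr1; apply.
Qed.

Definition in_span (f : JX -> R) : Prop := exists (c : R) (n : nat) (b : nat -> R),
  f = fun y => c * s y + \sum_(i < n) b i * estar i y.

Lemma in_span_Jstar f : in_span f -> Jstar s estar f.
Proof.
case=> c [n [b ->]]; split.
  apply: bdd_linearD; first exact: bdd_linearZ.
  by apply: bdd_linear_sum => i; apply: bdd_linearZ.
exists c => eps eps_gt0; exists n, b; apply: le_lt_trans eps_gt0.
by apply: dnorm_le => y _; rewrite /= addrAC addrK subrr normr0.
Qed.

Lemma in_spanD f g : in_span f -> in_span g -> in_span (fun y => f y + g y).
Proof.
case=> [c1 [n1 [b1 ->]]] [c2 [n2 [b2 ->]]].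
exists (c1 + c2), (n1 + n2)%N, (fun i => trunc n1 b1 i + trunc n2 b2 i).
apply: funext => y; rewrite mulrDl.
under [X in _ = _ + X]eq_bigr do rewrite mulrDl.
rewrite big_split /= (big_trunc_widen b1 (estar^~ y) (leq_addr n2 n1)).
by rewrite (big_trunc_widen b2 (estar^~ y) (leq_addl n1 n2)); ring.
Qed.

Lemma in_spanZ c f : in_span f -> in_span (fun y => c * f y).
Proof.
case=> c1 [n1 [b1 ->]]; exists (c * c1), n1, (fun i => c * b1 i).
apply: funext => y; rewrite mulrDr mulr_sumr mulrA; congr (_ + _).
by apply: eq_bigr => i _; rewrite mulrA.
Qed.

Lemma in_spanB f g : in_span f -> in_span g -> in_span (fun y => f y - g y).
Proof.
move=> span_f span_g; have := in_spanD span_f (in_spanZ (-1) span_g).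
by congr in_span; apply: funext => y; rewrite mulN1r.
Qed.

Lemma in_span_sum (I : Type) (r : seq I) (F : I -> JX -> R) :
  (forall i, in_span (F i)) -> in_span (fun y => \sum_(i <- r) F i y).
Proof.
move=> span_F; elim: r => [|i r IH].
  exists 0, 0%N, (fun _ => 0); apply: funext => y.
  by rewrite big_nil big_ord0 mul0r addr0.
by under eq_fun do rewrite big_cons; apply: in_spanD.
Qed.

Lemma in_span_vseq k : in_span (v k).
Proof.
exists 1, k, (fun _ => -1); apply: funext => y; rewrite /vseq mul1r.
by congr (_ + _); rewrite -sumrN; apply: eq_bigr => i _; rewrite mulN1r.
Qed.

Lemma exists_norming_functional s0 n (a : nat -> R) : J_admissible s0 ->
  exists f, [/\ Jstar s estar f, forall y, `|f y| <= `|y|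
              & f (efin n a) = `|J_term x (trunc n a) s0|].
Proof.
move=> adm_s0; pose p i := nth (0%N, 0%N) s0 i.
have [mu [mu_le mu_c]] := exists_norming_coefs (fun i => x (p i).1) (size s0)
   (fun i => \sum_((p i).1 <= j < (p i).2.+1) trunc n a j).
pose F i y := v (p i).1 y - v (p i).2.+1 y.
exists (fun y => \sum_(i < size s0) mu i * F i y); split.
- apply: in_span_Jstar; apply: in_span_sum => i; apply: in_spanZ.
  by apply: in_spanB; apply: in_span_vseq.
- move=> y; apply: le_trans (mu_le (fun i => F i y)) _.
  have := norm_Jterm_op_le y adm_s0.
  by rewrite /Jterm_op (big_nth (0%N, 0%N)) big_mkord.
rewrite /J_term (big_nth (0%N, 0%N)) big_mkord -mu_c; apply: eq_bigr => i _.
rewrite /F vseq_efinB //; apply: leqW.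
by case/andP: adm_s0 => /allP-> //; rewrite mem_nth.
Qed.

Lemma norm_sup_Jstar y :
  `|y| = sup [set `|f y| | f in [set f | Jstar s estar f /\ dnorm f <= 1]].
Proof.
set S := [set _ | _ in _].
have S_ub : ubound S `|y|.
  move=> _ [f [[lin_f _] f_le1] <-]; apply: le_trans (ler_dnorm y lin_f) _.
  by rewrite -{2}[`|y|]mul1r ler_wpM2r.
have S_sup : has_sup S.
  split; last by exists `|y|.
  exists `|v 0 y|, (v 0) => //.
  by split; [exact: in_span_Jstar (in_span_vseq 0) | rewrite dnorm_vseq].
apply/eqP; rewrite eq_le ge_sup //; last by case: S_sup.
rewrite andbT; apply/ler_addgt0Pr => eps eps_gt0.
have eps3_gt0 : 0 < eps / 3%:R by rewrite divr_gt0 // ltr0Sn.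
have [n [a ya]] := e_dense y eps3_gt0.
have [_ [s0 adm_s0 <-]] := sup_adherent eps3_gt0 (has_sup_J x_normed (@trunc_ge R n a)).
rewrite -/(J_norm x (trunc n a)) -e_norm => J_gt.
have [f [Js_f f_le f_efin]] := exists_norming_functional n a adm_s0.
have f_S : `|f y| <= sup S.
  apply: sup_upper_bound => //; exists f => //; split => //.
  by apply: dnorm_le => z z_le1; apply: le_trans (f_le z) z_le1.
have f_split : f y = f (efin n a) + f (y - efin n a).
  by rewrite -blinearD; [rewrite addrC subrK | case: Js_f].
have y_split : `|y| <= `|efin n a| + `|y - efin n a|.
  by have := ler_normD (efin n a) (y - efin n a); rewrite addrC subrK.
have /andP[fd_ge _] : - `|y - efin n a| <= f (y - efin n a) <= `|y - efin n a|.
  by rewrite -ler_norml f_le.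
have := ler_norm (f y).
have eps3 : eps = 3%:R * (eps / 3%:R) by rewrite mulrC divfK // pnatr_eq0.
lra.
Qed.

Lemma sum_le_dnorm_fcomb n (a : nat -> R) : `|\sum_(i < n) a i| <= dnorm (fcomb n a v).
Proof.
case: n => [|n]; first by rewrite big_ord0 normr0 (ge0_dnorm (bdd_linear_fcomb 0 a)).
have := dnorm_ub (y := e n) (bdd_linear_fcomb n.+1 a).
by rewrite norm_e lexx fcomb_e //; apply.
Qed.

Lemma expansion_exists_unique f : Jstar s estar f -> exists! a, expansion v f a.
Proof.
move=> Js_f; exists (fun i => f (jdiff e i)); split; first exact: expansion_jdiff.
by move=> a f_exp; rewrite (expansion_unique Js_f.1 f_exp).
Qed.

Lemma vstar_normE n (a : nat -> R) :
  vstar_norm s estar n a = `|\sum_(i < n) a i *: jdiff e i|.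
Proof.
rewrite norm_sup_Jstar /vstar_norm; congr sup; apply/seteqP.
by split => _ [f [Js_f f_le1] <-]; exists f => //;
  rewrite (blinear_sum _ _ _ Js_f.1) (coef_vseqE Js_f).
Qed.

Lemma jdiff_sum n (a : nat -> R) : \sum_(i < n.+1) a i *: jdiff e i =
  \sum_(i < n.+1) (a i - a i.+1) *: e i + a n.+1 *: e n.
Proof.
elim: n => [|n IH]; first by rewrite !big_ord1 /= scalerBl subrK.
rewrite big_ord_recr IH [in RHS]big_ord_recr /= !scalerBl !scalerBr -!addrA.
by congr (_ + _); rewrite addNr addr0 addrCA subrr addr0.
Qed.

Lemma vstar_norm_Jd n (a : nat -> R) : (forall i, (n <= i)%N -> a i = 0) ->
  vstar_norm s estar n a = Jd_norm x a.
Proof.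
move=> a_supp; rewrite vstar_normE Jd_normE.
have -> : \sum_(i < n) a i *: jdiff e i = efin n (fun i => a i - a i.+1).
  case: n a_supp => [|m] a_supp; first by rewrite !big_ord0.
  by rewrite jdiff_sum a_supp // scale0r addr0.
rewrite (e_norm n (fun i => a i - a i.+1)); congr J_norm; apply: funext => i.
by rewrite /trunc; case: ltnP => // ni; rewrite !a_supp ?subrr // ltnW.
Qed.

Lemma vstar_norm_trunc n (a : nat -> R) :
  vstar_norm s estar n a = vstar_norm s estar n (trunc n a).
Proof.
by rewrite !vstar_normE; congr `|_|; apply: eq_bigr => i _; rewrite /trunc ltn_ord.
Qed.

Lemma vstar_norm_mul_le n (a b : nat -> R) :
  vstar_norm s estar n (fun i => a i * b i) <=
  2 * vstar_norm s estar n a * vstar_norm s estar n b.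
Proof.
have ab_trunc : trunc n (fun i => a i * b i) = fun i => trunc n a i * trunc n b i.
  by apply: funext => i; rewrite /trunc; case: ifP; rewrite ?mul0r.
rewrite vstar_norm_trunc (vstar_norm_trunc n a) (vstar_norm_trunc n b) ab_trunc.
rewrite !vstar_norm_Jd => [|i ni|i ni|i ni]; rewrite ?trunc_ge ?mul0r //.
exact (Jd_norm_mul_le x_normed x_unc (@trunc_ge R n a) (@trunc_ge R n b)).
Qed.

End Jamesification.

Theorem proposition1p15 (R : realType) (X : completeNormedModType R)
  (x : nat -> X)
  (JX : completeNormedModType R) (e : nat -> JX)
  (s : JX -> R) (estar : nat -> JX -> R) :
  schauder_basis x -> normalized x -> one_unconditional x ->
  (* JX, e is the jamesification J(X) with its unit vector basis *)
  (forall (n : nat) (a : nat -> R),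
     `|\sum_(i < n) a i *: e i| = J_norm x (trunc n a)) ->
  (forall (y : JX) (eps : R), 0 < eps ->
     exists (n : nat) (a : nat -> R), `|y - \sum_(i < n) a i *: e i| < eps) ->
  (* s and the biorthogonals e_i^* in J(X)^* *)
  bdd_linear s -> (forall j, s (e j) = 1) ->
  (forall i, bdd_linear (estar i)) ->
  (forall i j, estar i (e j) = (i == j)%:R) ->
  let v := vseq s estar in
  let Js := Jstar s estar in
  (* (i) *)
  ((forall i, Js (v i)) /\ (forall i, dnorm (v i) = 1) /\
   (forall (m n : nat) (a : nat -> R), (m <= n)%N ->
      dnorm (fcomb m a v) <= dnorm (fcomb n a v)) /\
   (forall f, Js f -> exists! a : nat -> R, expansion v f a)) /\
  (* (ii) *)
  (forall (n : nat) (a : nat -> R),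
     `|\sum_(i < n) a i| <= dnorm (fcomb n a v)) /\
  (* (iii) *)
  ((forall y : JX,
      `|y| = sup [set `|f y| | f in [set f | Js f /\ dnorm f <= 1]]) /\
   (forall f, Js f ->
      coef v f 0 = f (e 0) /\
      forall i, coef v f i.+1 = f (e i.+1) - f (e i)) /\
   (forall (n : nat) (a : nat -> R),
      vstar_norm s estar n a =
      `|\sum_(i < n) a i *: jdiff e i|)) /\
  (* (iv) *)
  (forall (n : nat) (a : nat -> R), (forall i, (n <= i)%N -> a i = 0) ->
     vstar_norm s estar n a = Jd_norm x a) /\
  (* (v) *)
  (forall (n : nat) (a b : nat -> R),
     vstar_norm s estar n (fun i => a i * b i) <=
     2 * vstar_norm s estar n a * vstar_norm s estar n b).
Proof.
move=> _ x_normed x_unc e_norm e_dense s_lin s_e estar_lin estar_e v Js.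
split; [split; [|split; [|split]] | split; [|split; [split; [|split] | split]]].
- by move=> i; apply: in_span_Jstar (in_span_vseq _ _ i).
- by apply: dnorm_vseq.
- by move=> m n a; apply: dnorm_fcomb_mono.
- by apply: expansion_exists_unique.
- by apply: sum_le_dnorm_fcomb.
- by apply: norm_sup_Jstar.
- move=> f Js_f; have -> : coef v f = fun i => f (jdiff e i) by apply: coef_vseqE.
  by split => // i; rewrite blinearB //; case: Js_f.
- by apply: vstar_normE.
- by apply: vstar_norm_Jd.
- by apply: vstar_norm_mul_le.
Qed.
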